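(* Let $d\ge 1$ and $0<\alpha\le 1/2$. There is a constant $C$ (depending only on $d$ and $\alpha$) such that for every positive integer $n$ there exists an $n$-point set $S\subset\mathbb{R}^d$ such that the origin lies at depth $\alpha n$ with respect to $S$, but the origin is contained in at most $$\bigl((d+1)\alpha^d-2d\alpha^{d+1}\bigr)\frac{n^{d+1}}{(d+1)!}+C\,n^{d}$$ of the $d$-simplices spanned by $S$.
   Context: A point $p$ lies at depth $m$ with respect to a finite set $S\subset\mathbb{R}^d$ if every closed halfspace containing $p$ contains at least $m$ points of $S$. A $d$-simplex spanned by $S$ is the convex hull of a $(d+1)$-element subset of $S$; the count is over $(d+1)$-element subsets of $S$ whose convex hull contains the origin. *)

From HB Require Import structures.
From mathcomp Require Import all_boot all_order all_algebra.
From mathcomp Require Import boolp reals.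
Set Implicit Arguments. Unset Strict Implicit. Unset Printing Implicit Defensive.
Import Order.TTheory GRing.Theory Num.Theory.
Local Open Scope ring_scope.

Definition dotp (R : realType) (d : nat) (u x : 'rV[R]_d) : R :=
  \sum_(k < d) u 0 k * x 0 k.

Definition in_halfspace (R : realType) (d : nat) (u : 'rV[R]_d) (c : R)
  (x : 'rV[R]_d) : bool := c <= dotp u x.

Definition at_depth (R : realType) (d n : nat) (S : 'I_n -> 'rV[R]_d)
  (p : 'rV[R]_d) (m : R) : Prop :=
  forall (u : 'rV[R]_d) (c : R), u != 0 -> in_halfspace u c p ->
    m <= (#|[set i : 'I_n | in_halfspace u c (S i)]|)%:R.

Definition in_conv_hull (R : realType) (d n : nat) (S : 'I_n -> 'rV[R]_d)
  (T : {set 'I_n}) (p : 'rV[R]_d) : Prop :=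
  exists lam : 'I_n -> R,
    [/\ forall i, 0 <= lam i,
        forall i, i \notin T -> lam i = 0,
        \sum_(i < n) lam i = 1
      & \sum_(i < n) lam i *: S i = p].

(* Number of d-simplices spanned by S (convex hulls of (d+1)-element subsets
   of S, S injective) that contain p. *)
Definition simplex_count (R : realType) (d n : nat) (S : 'I_n -> 'rV[R]_d)
  (p : 'rV[R]_d) : nat :=
  #|[set T : {set 'I_n} | (#|T| == d.+1) && `[< in_conv_hull S T p >]]|.

(* The n points are weighted points w g(s) on the moment curve
   g(s) = (1, s, ..., s^(d-1)): the origin itself, m ~ alpha n antipodal pairs
   +-j g(j), and the remaining n - 2m - 1 points on the ray through g(m+1).
   A closed halfspace containing the origin contains the origin and one point
   of each pair, so the origin has depth m + 1 >= alpha n.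
   If the origin is a convex combination of d+1 of the points, pairing with the
   coefficient vector of any polynomial of degree < d shows that the weighted
   moments sum_i lam_i w_i P(s_i) vanish. Testing them against polynomials that
   vanish at all nodes but one or two forces w_a prod_(c <> a) (s_a - s_c) to
   have the same sign for every vertex a, and leaves room for at most one point
   on the last ray. So, apart from the O(n^d) simplices through the origin or
   through a whole antipodal pair, a simplex containing the origin is fixed by
   d+1 pair labels and a global sign (2 C(m, d+1) choices) or by d pair labels
   and one ray point ((n - 2m - 1) C(m, d) choices); this is
   ((d+1) alpha^d - 2 d alpha^(d+1)) n^(d+1) / (d+1)! to leading order. *)

From HB Require Import structures.
From mathcomp Require Import all_boot all_order all_algebra.
From mathcomp Require Import boolp reals.
From mathcomp Require Import zify ring lra.
Set Implicit Arguments. Unset Strict Implicit. Unset Printing Implicit Defensive.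
Import Order.TTheory GRing.Theory Num.Theory.
Local Open Scope ring_scope.

Section VanishingMoments.
Variables (R : realDomainType) (d : nat) (I : finType).
Variables (lam t w : I -> R) (T : {set I}).
Hypothesis moments_eq0 : forall g : {poly R}, (size g <= d)%N ->
  \sum_(i in T) lam i * (w i * g.[t i]) = 0.
Hypothesis lam_ge0 : forall i, 0 <= lam i.
Hypothesis lam_sum1 : \sum_(i in T) lam i = 1.
Hypothesis card_T : #|T| = d.+1.
Hypothesis w_neq0 : {in T, forall i, w i != 0}.

Definition nodal (B : {set I}) : {poly R} := \prod_(c in B) ('X - (t c)%:P).

Lemma size_nodal (B : {set I}) : size (nodal B) = #|B|.+1.
Proof. by rewrite /nodal -big_enum size_prod_XsubC cardE. Qed.

Lemma horner_nodal (B : {set I}) x : (nodal B).[x] = \prod_(c in B) (x - t c).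
Proof. by rewrite /nodal horner_prod; apply: eq_bigr => c _; rewrite hornerXsubC. Qed.

Lemma root_nodal (B : {set I}) c : c \in B -> (nodal B).[t c] = 0.
Proof. by move=> cB; rewrite horner_nodal (bigD1 c) //= subrr mul0r. Qed.

Lemma exists_lam_gt0 : exists2 a, a \in T & 0 < lam a.
Proof.
have [//|no_pos] := pselect (exists2 a, a \in T & 0 < lam a).
have : \sum_(i in T) lam i <= 0.
  by apply: sumr_le0 => i iT; rewrite leNgt; apply: contra_notN no_pos; exists i.
by rewrite lam_sum1 ler10.
Qed.

Lemma moment_single (g : {poly R}) a : a \in T -> (size g <= d)%N ->
  {in T, forall i, i != a -> g.[t i] = 0} -> lam a * (w a * g.[t a]) = 0.
Proof.
move=> aT sg g0; have := moments_eq0 sg; rewrite (bigD1 a) //= big1 ?addr0 //.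
by move=> i /andP[iT ia]; rewrite g0 // !mulr0.
Qed.

Definition lagrange_denom a := \prod_(c in T :\ a) (t a - t c).

Lemma lagrange_denomE a b : a \in T -> b \in T -> a != b ->
  lagrange_denom a = (t a - t b) * (nodal (T :\ a :\ b)).[t a].
Proof.
move=> aT bT ab; rewrite /lagrange_denom (bigD1 b) /=; last by rewrite in_setD1 eq_sym ab.
by rewrite horner_nodal; congr (_ * _); apply: eq_bigl => c; rewrite !in_setD1 andbC.
Qed.

(* Testing the moment condition on the polynomial vanishing on T \ {a, b}. *)
Lemma lagrange_denom_balance a b : a \in T -> b \in T -> a != b ->
  lam a * (w a * lagrange_denom a) = lam b * (w b * lagrange_denom b).
Proof.
move=> aT bT ab; set B := T :\ a :\ b.
have size_B : (size (nodal B) <= d)%N.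
  have := cardsD1 a T; have := cardsD1 b (T :\ a).
  rewrite size_nodal aT in_setD1 eq_sym ab bT card_T -/B; lia.
have := moments_eq0 size_B; rewrite (bigD1 a) //= (bigD1 b) /=; last first.
  by rewrite bT eq_sym ab.
rewrite big1 ?addr0 => [E|i /andP[/andP[iT ia] ib]]; last first.
  by rewrite root_nodal ?mulr0 // !in_setD1 ib ia.
rewrite (lagrange_denomE aT bT ab) (lagrange_denomE bT aT _) 1?eq_sym //.
have -> : T :\ b :\ a = B by rewrite /B setDDl setUC -setDDl.
apply/eqP; rewrite -subr_eq0 -[X in _ == X](mulr0 (t a - t b)) -E; apply/eqP; ring.
Qed.

(* Take a vertex a with lam a > 0. If a is at the top, test the moments with the
   nodal polynomial of the lower vertices: all terms are >= 0 and a's is > 0.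
   Otherwise test with (X - top) times the nodal polynomial of the lower
   vertices other than a, which vanishes at every vertex but a. *)
Lemma no_two_points_at_top (E : {set I}) (top : R) :
  E \subset T -> (1 < #|E|)%N -> {in E, forall e, t e = top} ->
  {in E, forall e, 0 < w e} -> {in T :\: E, forall c, t c < top} ->
  {in T :\: E &, injective t} -> False.
Proof.
move=> ET E2 tE wE tlt tinj; set P := T :\: E.
have card_P : (#|P| + #|E| = d.+1)%N.
  by rewrite -card_T -(cardsID E T) (setIidPr ET) addnC.
have [a aT la] := exists_lam_gt0.
have [aE|aNE] := boolP (a \in E).
  have size_P : (size (nodal P) <= d)%N by rewrite size_nodal; lia.
  have nodal_gt0 : 0 < (nodal P).[top].
    by rewrite horner_nodal; apply: prodr_gt0 => c cP; rewrite subr_gt0 tlt.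
  have term_ge0 i : i \in T -> 0 <= lam i * (w i * (nodal P).[t i]).
    move=> iT; have [iE|iNE] := boolP (i \in E).
      by rewrite tE // !mulr_ge0 // ltW // wE.
    by rewrite root_nodal ?mulr0 // inE iNE.
  have := psumr_eq0P term_ge0 (moments_eq0 size_P) aT; rewrite tE //.
  by apply/eqP; rewrite !mulf_neq0 // gt_eqF // wE.
have aP : a \in P by rewrite inE aNE.
pose g := ('X - top%:P) * nodal (P :\ a).
have size_g : (size g <= d)%N.
  have nodal_neq0 : nodal (P :\ a) != 0 by rewrite -size_poly_eq0 size_nodal.
  rewrite size_mul ?polyXsubC_eq0 // size_XsubC size_nodal.
  by have := cardsD1 a P; rewrite aP /=; lia.
have g_vanish : {in T, forall i, i != a -> g.[t i] = 0}.
  move=> i iT ia; rewrite hornerM; have [iE|iNE] := boolP (i \in E).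
    by rewrite hornerXsubC tE // subrr mul0r.
  by rewrite root_nodal ?mulr0 // !inE ia iNE.
have g_a_neq0 : g.[t a] != 0.
  rewrite hornerM hornerXsubC horner_nodal mulf_neq0 //.
    by rewrite subr_eq0 lt_eqF // tlt.
  apply/prodf_neq0 => c; rewrite in_setD1 => /andP[ca cP].
  by rewrite subr_eq0; apply: contra ca => /eqP/esym/(tinj _ _ cP aP) ->.
move/eqP: (moment_single aT size_g g_vanish).
by rewrite !mulf_eq0 (negbTE g_a_neq0) (negbTE (w_neq0 aT)) gt_eqF.
Qed.

Hypothesis t_inj : {in T &, injective t}.

Lemma lagrange_denom_neq0 a : a \in T -> lagrange_denom a != 0.
Proof.
move=> aT; apply/prodf_neq0 => c; rewrite in_setD1 => /andP[ca cT].
by rewrite subr_eq0; apply: contra ca => /eqP/esym/(t_inj cT aT) ->.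
Qed.

Lemma sg_weighted_denom_const a b : a \in T -> b \in T ->
  Num.sg (w a * lagrange_denom a) = Num.sg (w b * lagrange_denom b).
Proof.
have [a0 a0T la0] := exists_lam_gt0.
suff sg_a0 c : c \in T -> Num.sg (w c * lagrange_denom c) = Num.sg (w a0 * lagrange_denom a0).
  by move=> aT bT; rewrite !sg_a0.
move=> cT; have [->//|ca0] := eqVneq c a0.
have E := lagrange_denom_balance cT a0T ca0.
have nz : w a0 * lagrange_denom a0 != 0 by rewrite mulf_neq0 ?w_neq0 ?lagrange_denom_neq0.
have lc : 0 < lam c.
  rewrite lt_def lam_ge0 andbT; apply/eqP => lc0; move/eqP: E.
  by rewrite lc0 mul0r eq_sym mulf_eq0 (negbTE nz) orbF gt_eqF.
by have := congr1 Num.sg E; rewrite !sgrM (gtr0_sg lc) (gtr0_sg la0) !mul1r.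
Qed.

End VanishingMoments.

Lemma sgr_pm1 (R : realDomainType) (x : R) : x != 0 -> Num.sg x = 1 \/ Num.sg x = -1.
Proof.
by case: (ltgtP x 0) => [/ltr0_sg|/gtr0_sg|//]; [right|left].
Qed.

Lemma sign_bool_eq (R : numDomainType) (s : bool) (z y : R) : (z = 1 \/ z = -1) ->
  (if s then 1 else -1) * z = y -> s = (y * z == 1).
Proof.
have m1_neq1 : (-1 : R) != 1 by rewrite eqNr oner_eq0.
by case=> [->|->] <-; case: s;
  rewrite ?mulr1 ?mulrNN ?mul1r ?mulN1r ?opprK ?eqxx ?(negbTE m1_neq1).
Qed.

Lemma imsetD1_in (T1 T2 : finType) (f : T1 -> T2) (U : {set T1}) a :
  {in U &, injective f} -> a \in U -> f @: (U :\ a) = f @: U :\ f a.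
Proof.
move=> f_inj aU; apply/setP => x; apply/imsetP/idP.
  move=> [c /setD1P[ca cU] ->]; rewrite in_setD1 imset_f // andbT.
  by apply: contra ca => /eqP/f_inj ->.
case/setD1P => xa /imsetP[c cU xc]; exists c => //.
by rewrite in_setD1 cU andbT; apply: contraNneq xa => ca; rewrite xc ca.
Qed.

Lemma leq_card_setU_add (T : finType) (A B : {set T}) a b :
  (#|A| <= a -> #|B| <= b -> #|A :|: B| <= a + b)%N.
Proof. by move=> hA hB; apply: leq_trans (leq_card_setU A B) (leq_add hA hB). Qed.

Section Construction.
Variables (R : realType) (d n m : nat).
Hypothesis d_gt0 : (0 < d)%N.
Hypothesis pairs_lt_n : (2 * m < n)%N.

(* Point 0 is the origin; points 2j-1 and 2j (1 <= j <= m) are the antipodal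
   pair +-j g(j), where g(s) = (1, s, ..., s^(d-1)) is the moment curve; every
   further point v is v g(m+1). The distinct weights v make the points distinct. *)
Definition param (v : nat) : R :=
  if (v <= 2 * m)%N then (v.+1 %/ 2)%:R else m.+1%:R.
Definition weight_int (v : nat) : int :=
  if v == 0%N then 0 else if (v <= 2 * m)%N then
    (if odd v then (v.+1 %/ 2)%:Z else - (v.+1 %/ 2)%:Z) else v%:Z.
Definition weight (v : nat) : R := (weight_int v)%:~R.
Definition point (i : 'I_n) : 'rV[R]_d := weight i *: \row_(k < d) param i ^+ k.

Lemma weight_inj : injective weight.
Proof. by move=> a b /intr_inj; rewrite /weight_int; repeat (case: ifP; intro); lia. Qed.

Lemma point_inj : injective point.
Proof.
move=> i j /matrixP /(_ 0 (Ordinal d_gt0)); rewrite !mxE !expr0 !mulr1.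
by move/weight_inj/val_inj.
Qed.

Lemma dotp_point (g : {poly R}) (i : 'I_n) : (size g <= d)%N ->
  dotp (\row_(k < d) g`_k) (point i) = weight i * g.[param i].
Proof.
move=> sg; rewrite /dotp (horner_coef_wide _ sg) mulr_sumr.
by apply: eq_bigr => k _; rewrite !mxE; ring.
Qed.

Lemma dotp_sumr (u : 'rV[R]_d) (lam : 'I_n -> R) :
  dotp u (\sum_(i < n) lam i *: point i) = \sum_(i < n) lam i * dotp u (point i).
Proof.
rewrite /dotp; under eq_bigr do rewrite summxE mulr_sumr.
rewrite exchange_big; apply: eq_bigr => i _; rewrite mulr_sumr.
by apply: eq_bigr => k _; rewrite !mxE; ring.
Qed.

Lemma dotpN (u x : 'rV[R]_d) : dotp u (- x) = - dotp u x.
Proof. by rewrite /dotp -sumrN; apply: eq_bigr => k _; rewrite mxE mulrN. Qed.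

Lemma dotp0 (u : 'rV[R]_d) : dotp u 0 = 0.
Proof. by rewrite /dotp big1 // => k _; rewrite mxE mulr0. Qed.

(* Pairing the hull equation with the coefficient vector of g. *)
Lemma in_conv_hull0_moments (T : {set 'I_n}) : in_conv_hull point T 0 ->
  exists lam : 'I_n -> R, [/\ forall i, 0 <= lam i, \sum_(i in T) lam i = 1 &
    forall g : {poly R}, (size g <= d)%N ->
      \sum_(i in T) lam i * (weight i * g.[param i]) = 0].
Proof.
move=> [lam [lam_ge0 lamT lam_sum1 lam_point]]; exists lam; split => //.
  by rewrite -lam_sum1 [RHS](bigID (mem T)) /= [X in _ + X]big1 ?addr0 // => i /lamT.
move=> g sg; have := dotp_sumr (\row_(k < d) g`_k) lam.
rewrite lam_point dotp0 (bigID (mem T)) /= [X in _ + X]big1 ?addr0 => [E|i /lamT->]; last first.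
  by rewrite mul0r.
by rewrite [RHS]E; apply: eq_bigr => i _; rewrite dotp_point.
Qed.

Definition idx0 : 'I_n := Ordinal (leq_ltn_trans (leq0n _) pairs_lt_n).
Definition idx (v : nat) : 'I_n := insubd idx0 v.

Lemma val_idx v : (v < n)%N -> val (idx v) = v.
Proof. by move=> vn; rewrite /idx val_insubd vn. Qed.

Lemma point_idx0 : point idx0 = 0.
Proof. by rewrite /point /weight /weight_int /= scale0r. Qed.

Lemma point_pair_opp j : (0 < j <= m)%N -> point (idx (2 * j)) = - point (idx (2 * j).-1).
Proof.
move=> hj; rewrite /point !val_idx; try lia.
have -> : param (2 * j) = param (2 * j).-1.
  by rewrite /param; do 2 (case: ifP => ?); congr (_%:R); lia.
rewrite -scaleNr /weight -mulrNz; congr (_ *~ _ *: _).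
rewrite /weight_int; repeat (case: ifP; intro); lia.
Qed.

(* Each closed halfspace through the origin contains the origin and one point
   of every antipodal pair. *)
Lemma card_halfspace0_ge (u : 'rV[R]_d) (c : R) : c <= dotp u 0 ->
  (m.+1 <= #|[set i | in_halfspace u c (point i)]|)%N.
Proof.
rewrite dotp0 => c_le0.
pose f (j : 'I_m.+1) : 'I_n := if j == 0%N :> nat then idx0 else
  if c <= dotp u (point (idx (2 * j).-1)) then idx (2 * j).-1 else idx (2 * j).
have f_half j : ((f j).+1 %/ 2)%N = j.
  have := ltn_ord j; rewrite /f; case: ifP => [/eqP -> //|/eqP j0].
  by case: ifP => _ ?; rewrite val_idx; lia.
have f_inj : injective f by move=> i j fij; apply: val_inj; rewrite /= -f_half fij f_half.
rewrite -[m.+1]card_ord -(card_imset _ f_inj); apply: subset_leq_card.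
apply/subsetP => _ /imsetP[j _ ->]; rewrite inE /in_halfspace /f.
case: ifP => [_|j0]; first by rewrite point_idx0 dotp0.
case: ifP => // /negbT; rewrite -ltNge point_pair_opp ?dotpN; first lra.
by have := ltn_ord j; lia.
Qed.

Definition pair_idx (q : 'I_m) (s : bool) : 'I_n :=
  idx (if s then (2 * q).+1 else (2 * q).+2).

Lemma val_pair_idx q s : val (pair_idx q s) = if s then (2 * q).+1 else (2 * q).+2.
Proof. by have qm := ltn_ord q; rewrite /pair_idx val_idx //; case: s; lia. Qed.

Lemma param_pair_idx q s : param (pair_idx q s) = q.+1%:R.
Proof.
have := ltn_ord q; rewrite /param val_pair_idx.
by case: s; case: ifP => ? ?; congr (_%:R); lia.
Qed.

Lemma sg_weight_pair_idx q s : Num.sg (weight (pair_idx q s)) = if s then 1 else -1.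
Proof.
rewrite /weight; have -> : weight_int (pair_idx q s) = if s then q.+1%:Z else - q.+1%:Z.
  by have := ltn_ord q; rewrite /weight_int val_pair_idx; case: s;
    repeat (case: ifP; intro); lia.
by case: s; rewrite ?mulrNz ?sgrN gtr0_sg // ltr0z.
Qed.

Lemma pair_idx_inj q q' s s' : pair_idx q s = pair_idx q' s' -> q = q' /\ s = s'.
Proof.
move/(congr1 val); rewrite !val_pair_idx => h; split.
  by apply: val_inj => /=; move: h; case: s; case: s'; lia.
by move: h; case: s; case: s'; lia.
Qed.

Lemma pair_idxP (x : 'I_n) : (0 < x <= 2 * m)%N -> exists q s, x = pair_idx q s.
Proof.
move=> hx; have qm : (x.-1 %/ 2 < m)%N by lia.
by exists (Ordinal qm), (odd x); apply: val_inj; rewrite val_pair_idx /=; case: ifP; lia.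
Qed.

Definition ntop := (n - (2 * m).+1)%N.
Definition top_idx (e : 'I_ntop) : 'I_n := idx ((2 * m).+1 + e).

Lemma top_idxP (x : 'I_n) : (2 * m < x)%N -> exists e, x = top_idx e.
Proof.
move=> hx; have xn := ltn_ord x; have ek : (x - (2 * m).+1 < ntop)%N by rewrite /ntop; lia.
by exists (Ordinal ek); apply: val_inj; rewrite /top_idx val_idx /=; lia.
Qed.

Lemma param_top (x : 'I_n) : (2 * m < x)%N -> param x = m.+1%:R.
Proof. by rewrite /param; case: ifP => //; lia. Qed.

Lemma weight_top_gt0 (x : 'I_n) : (2 * m < x)%N -> 0 < weight x.
Proof. by move=> h; rewrite /weight ltr0z /weight_int; repeat (case: ifP; intro); lia. Qed.

Lemma weight_neq0 (x : 'I_n) : x != idx0 -> weight x != 0.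
Proof.
move=> x0; rewrite /weight intr_eq0; apply/eqP.
have : nat_of_ord x <> 0%N by move=> h; move/eqP: x0; apply; apply: val_inj.
by rewrite /weight_int; repeat (case: ifP; intro); lia.
Qed.

(* A set of pair points containing at most one point of each pair is recorded
   by its set of pair labels and a choice of sign for each label. *)
Definition pair_labels (U : {set 'I_n}) : {set 'I_m} :=
  [set q | (pair_idx q true \in U) || (pair_idx q false \in U)].
Definition pair_pick (U : {set 'I_n}) (q : 'I_m) : 'I_n :=
  if pair_idx q true \in U then pair_idx q true else pair_idx q false.
Definition sg_gap (Q : {set 'I_m}) (q : 'I_m) : R :=
  Num.sg (\prod_(p in Q :\ q) (q%:R - p%:R)).
Definition signed_pairs (Q : {set 'I_m}) (b : bool) : {set 'I_n} :=
  [set pair_idx q ((-1) ^+ b * sg_gap Q q == 1) | q in Q].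

Lemma sg_gap_pm1 Q q : sg_gap Q q = 1 \/ sg_gap Q q = -1.
Proof.
apply: sgr_pm1; apply/prodf_neq0 => p /setD1P[pq _].
by rewrite subr_eq0 eqr_nat; apply: contra pq => /eqP/val_inj->.
Qed.

Section PairSet.
Variable U : {set 'I_n}.
Hypothesis U_pairs : {in U, forall y, exists q s, y = pair_idx q s}.
Hypothesis U_no_pair : forall q, ~~ ((pair_idx q true \in U) && (pair_idx q false \in U)).

Lemma pair_labelsP x q s : x \in U -> x = pair_idx q s -> q \in pair_labels U.
Proof. by move=> /[swap]->; rewrite inE; case: s => ->; rewrite ?orbT. Qed.

Lemma pair_pick_inj : injective (pair_pick U).
Proof. by move=> q q'; rewrite /pair_pick; do 2 case: ifP => _; case/pair_idx_inj. Qed.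

Lemma pair_pick_id x q s : x \in U -> x = pair_idx q s -> pair_pick U q = x.
Proof.
move=> xU xq; subst x; move: xU (U_no_pair q); rewrite /pair_pick; case: s => -> //.
by rewrite andbT => /negbTE->.
Qed.

Lemma pair_pick_labels : U = pair_pick U @: pair_labels U.
Proof.
apply/setP => x; apply/idP/imsetP => [xU|[q qU ->]].
  have [q [s xq]] := U_pairs xU.
  by exists q; [exact: pair_labelsP xU xq | rewrite (pair_pick_id xU xq)].
by move: qU; rewrite inE /pair_pick; case: ifP => // _ /orP[]->.
Qed.

Lemma card_pair_labels : #|pair_labels U| = #|U|.
Proof. by rewrite {2}pair_pick_labels card_imset //; exact: pair_pick_inj. Qed.

Lemma prod_param_gaps x q s : x \in U -> x = pair_idx q s ->
  \prod_(c in U :\ x) (param x - param c) = \prod_(p in pair_labels U :\ q) (q%:R - p%:R).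
Proof.
move=> xU xq; have qU := pair_labelsP xU xq.
have inj_in A : {in A &, injective (pair_pick U)} by move=> ? ? _ _; exact: pair_pick_inj.
rewrite {1}pair_pick_labels -(pair_pick_id xU xq) -imsetD1_in // big_imset //=.
apply: eq_bigr => p _; rewrite /pair_pick.
by do 2 case: ifP => _; rewrite !param_pair_idx -!natr1; ring.
Qed.

Lemma pair_set_signs (f : 'I_m -> bool) :
  (forall x q s, x \in U -> x = pair_idx q s -> s = f q) ->
  U = [set pair_idx q (f q) | q in pair_labels U].
Proof.
move=> Uf; apply/setP => x; apply/idP/imsetP => [xU|[q qU ->]].
  have [q [s xq]] := U_pairs xU.
  by exists q; [exact: pair_labelsP xU xq | rewrite xq (Uf _ _ _ xU xq)].
have : pair_pick U q \in U by rewrite {2}pair_pick_labels imset_f.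
by rewrite /pair_pick; case: ifP => _ pU; rewrite -(Uf _ _ _ pU erefl).
Qed.
End PairSet.

Section OriginSimplex.
Variables (T : {set 'I_n}) (lam : 'I_n -> R).
Hypothesis card_T : #|T| = d.+1.
Hypothesis lam_ge0 : forall i, 0 <= lam i.
Hypothesis lam_sum1 : \sum_(i in T) lam i = 1.
Hypothesis moments_eq0 : forall g : {poly R}, (size g <= d)%N ->
  \sum_(i in T) lam i * (weight i * g.[param i]) = 0.
Hypothesis idx0_notin_T : idx0 \notin T.
Hypothesis T_no_pair : forall q, ~~ ((pair_idx q true \in T) && (pair_idx q false \in T)).

Let tops := [set x in T | (2 * m < x)%N].
Let t (i : 'I_n) := param i.

Lemma weight_neq0_T : {in T, forall i : 'I_n, weight i != 0}.
Proof. by move=> i iT; apply: weight_neq0; apply: contraNneq idx0_notin_T => <-. Qed.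

Lemma low_pairP x : x \in T -> ~~ (2 * m < x)%N -> exists q s, x = pair_idx q s.
Proof.
move=> xT; rewrite -leqNgt => hx; apply: pair_idxP; rewrite hx andbT lt0n.
by apply: contraNneq idx0_notin_T => x0; rewrite (_ : idx0 = x) //; apply: val_inj.
Qed.

Lemma param_low_lt x : x \in T -> ~~ (2 * m < x)%N -> t x < m.+1%:R.
Proof. by move=> xT /(low_pairP xT)[q [s ->]]; rewrite /t param_pair_idx ltr_nat ltnS. Qed.

Lemma param_low_inj x y : x \in T -> y \in T -> ~~ (2 * m < x)%N -> ~~ (2 * m < y)%N ->
  t x = t y -> x = y.
Proof.
move=> xT yT /(low_pairP xT)[q [s xq]] /(low_pairP yT)[q' [s' yq]].
subst x y; rewrite /t !param_pair_idx => /eqP; rewrite eqr_nat eqSS => /eqP/val_inj qq.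
subst q'; have := T_no_pair q.
by case: s xT => xT; case: s' yT => yT //; rewrite xT yT.
Qed.

Lemma card_tops_le1 : (#|tops| <= 1)%N.
Proof.
rewrite leqNgt; apply/negP => tops2.
apply: (no_two_points_at_top moments_eq0 lam_ge0 lam_sum1 card_T weight_neq0_T
  (E := tops) (top := m.+1%:R)) => //.
- by apply/subsetP => x /setIdP[].
- by move=> e /setIdP[_ he]; rewrite param_top.
- by move=> e /setIdP[_ he]; rewrite weight_top_gt0.
- move=> c /setDP[cT]; rewrite inE cT /= => hc; exact: param_low_lt.
- move=> x y /setDP[xT] + /setDP[yT]; rewrite !inE xT yT /=.
  exact: param_low_inj.
Qed.

Lemma param_inj_T : {in T &, injective t}.
Proof.
move=> x y xT yT.
have [hx|hx] := boolP (2 * m < x)%N; have [hy|hy] := boolP (2 * m < y)%N.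
- move=> _; apply: (card_le1_eqP card_tops_le1); rewrite inE ?xT ?yT //.
- by move=> h; have := param_low_lt yT hy; rewrite -h /t param_top // ltxx.
- by move=> h; have := param_low_lt xT hx; rewrite h /t param_top // ltxx.
- exact: param_low_inj.
Qed.

Let sg_denom_const :=
  sg_weighted_denom_const moments_eq0 lam_ge0 lam_sum1 card_T weight_neq0_T param_inj_T.

Lemma simplex_without_top : #|tops| = 0%N ->
  exists (Q : {set 'I_m}) b, #|Q| = d.+1 /\ T = signed_pairs Q b.
Proof.
move=> tops0.
have T_pairs : {in T, forall y, exists q s, y = pair_idx q s}.
  move=> y yT; apply: low_pairP => //; apply/negP => hy.
  by have := in_set0 y; rewrite -(cards0_eq tops0) inE yT hy.
have [a aT] : exists a, a \in T by apply/card_gt0P; rewrite card_T.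
set sg_a := Num.sg (weight a * lagrange_denom t T a).
have sg_a_pm1 : sg_a = 1 \/ sg_a = -1.
  by apply/sgr_pm1/mulf_neq0; [exact: weight_neq0_T | exact: (lagrange_denom_neq0 param_inj_T aT)].
exists (pair_labels T), (sg_a == -1); split; first by rewrite card_pair_labels.
rewrite /signed_pairs (_ : (-1) ^+ (sg_a == -1) = sg_a); last first.
  by case: sg_a_pm1 => ->; rewrite ?eqxx ?expr1 // eq_sym eqNr oner_eq0.
apply: pair_set_signs => // x q s xT xq.
have := sg_denom_const xT aT; rewrite -/sg_a sgrM /lagrange_denom.
rewrite (prod_param_gaps T_pairs T_no_pair xT xq) -/(sg_gap _ _) xq sg_weight_pair_idx.
by apply: sign_bool_eq; exact: sg_gap_pm1.
Qed.

Lemma simplex_with_top : #|tops| = 1%N ->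
  exists e (Q : {set 'I_m}), #|Q| = d /\ T = top_idx e |: signed_pairs Q true.
Proof.
move=> /eqP/cards1P[e tops_e]; have : e \in tops by rewrite tops_e set11.
rewrite inE => /andP[eT he]; set U := T :\ e.
have U_pairs : {in U, forall y, exists q s, y = pair_idx q s}.
  move=> y /setD1P[ye yT]; apply: low_pairP => //; apply: contra ye => hy.
  by rewrite -in_set1 -tops_e inE yT.
have U_no_pair q : ~~ ((pair_idx q true \in U) && (pair_idx q false \in U)).
  by apply: contra (T_no_pair q) => /andP[/setD1P[_ ->] /setD1P[_ ->]].
have [e' ee'] := top_idxP he.
exists e', (pair_labels U); split.
  by rewrite card_pair_labels //; have := cardsD1 e T; rewrite eT card_T -/U; lia.
rewrite -ee' -{1}(setD1K eT) -/U; congr (_ |: _).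
rewrite /signed_pairs expr1; apply: pair_set_signs => // x q s xU xq.
have /setD1P[xe xT] := xU.
(* The top vertex e has a positive weight and lies beyond all the others, so
   the common sign is +1 and it fixes the sign of each pair vertex. *)
have denom_e_gt0 : 0 < lagrange_denom t T e.
  apply: prodr_gt0 => c cU; rewrite subr_gt0 /t (param_top he).
  by have [q' [s' ->]] := U_pairs c cU; rewrite param_pair_idx ltr_nat ltnS.
have := sg_denom_const xT eT.
rewrite [in RHS]sgrM (gtr0_sg (weight_top_gt0 he)) (gtr0_sg denom_e_gt0) mulr1.
rewrite sgrM /lagrange_denom (bigD1 e) /=; last by rewrite in_setD1 eq_sym xe eT.
rewrite (eq_bigl (fun c => c \in U :\ x)); last first.
  by move=> c; rewrite !in_setD1; case: (c == e); case: (c == x); case: (c \in T).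
rewrite (prod_param_gaps U_pairs U_no_pair xU xq) sgrM -/(sg_gap _ _).
have x_low : ~~ (2 * m < x)%N by rewrite xq val_pair_idx; case: (s); have := ltn_ord q; lia.
rewrite (ltr0_sg (_ : param x - param e < 0)); last first.
  by rewrite subr_lt0 /t (param_top he) param_low_lt.
rewrite xq sg_weight_pair_idx => h; rewrite -[_ * sg_gap _ _]mul1r; apply: sign_bool_eq => //.
by case: (sg_gap_pm1 (pair_labels U) q) => ->; rewrite ?mulN1r ?opprK; [right|left].
Qed.

End OriginSimplex.

Lemma origin_simplex_shape (T : {set 'I_n}) : #|T| = d.+1 -> in_conv_hull point T 0 ->
  idx0 \notin T -> (forall q, ~~ ((pair_idx q true \in T) && (pair_idx q false \in T))) ->
  (exists (Q : {set 'I_m}) b, #|Q| = d.+1 /\ T = signed_pairs Q b) \/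
  (exists e (Q : {set 'I_m}), #|Q| = d /\ T = top_idx e |: signed_pairs Q true).
Proof.
move=> card_T /in_conv_hull0_moments[lam [lam_ge0 lam_sum1 moments_eq0]] T0 T_no_pair.
have := card_tops_le1 card_T lam_ge0 lam_sum1 moments_eq0 T0 T_no_pair.
rewrite leq_eqVlt ltnS leqn0 => /orP[/eqP tops1|/eqP tops0].
  by right; apply: simplex_with_top tops1.
by left; apply: simplex_without_top tops0.
Qed.

Definition simplices_through_origin : {set {set 'I_n}} :=
  [set idx0 |: U | U in [set U : {set 'I_n} | #|U| == d]].
Definition simplices_with_pair : {set {set 'I_n}} :=
  [set pair_idx x.1 true |: (pair_idx x.1 false |: x.2)
    | x in setX [set: 'I_m] [set U : {set 'I_n} | #|U| == d.-1]].
Definition signed_pair_simplices : {set {set 'I_n}} :=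
  [set signed_pairs x.1 x.2 | x in setX [set Q : {set 'I_m} | #|Q| == d.+1] [set: bool]].
Definition top_simplices : {set {set 'I_n}} :=
  [set top_idx x.1 |: signed_pairs x.2 true
    | x in setX [set: 'I_ntop] [set Q : {set 'I_m} | #|Q| == d]].

Lemma origin_simplices_cover :
  [set T : {set 'I_n} | (#|T| == d.+1) && `[< in_conv_hull point T 0 >]] \subset
  simplices_through_origin :|: simplices_with_pair :|: signed_pair_simplices :|: top_simplices.
Proof.
apply/subsetP => T; rewrite inE => /andP[/eqP card_T /asboolP hull]; rewrite !inE.
have [T0|T0] := boolP (idx0 \in T).
  apply/orP; left; apply/orP; left; apply/orP; left.
  apply/imsetP; exists (T :\ idx0); last by rewrite setD1K.
  by rewrite inE; have := cardsD1 idx0 T; rewrite T0 card_T => -[->].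
have [[q /andP[qT qF]]|T_no_pair] :=
  pselect (exists q, (pair_idx q true \in T) && (pair_idx q false \in T)).
  apply/orP; left; apply/orP; left; apply/orP; right.
  have ne : pair_idx q false != pair_idx q true by apply/eqP => /pair_idx_inj[].
  apply/imsetP; exists (q, T :\ pair_idx q true :\ pair_idx q false); last first.
    by rewrite /= setD1K ?setD1K // in_setD1 ne.
  rewrite in_setX inE /= inE.
  have := cardsD1 (pair_idx q true) T.
  have := cardsD1 (pair_idx q false) (T :\ pair_idx q true).
  by rewrite in_setD1 ne qT qF card_T /= !add1n => h1 [->]; apply/eqP; rewrite h1.
have T_no_pair' q : ~~ ((pair_idx q true \in T) && (pair_idx q false \in T)).
  by apply/negP => Tq; apply: T_no_pair; exists q.
case: (origin_simplex_shape card_T hull T0 T_no_pair').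
  move=> [Q [b [card_Q ->]]]; apply/orP; left; apply/orP; right; apply/imsetP.
  by exists (Q, b); rewrite // in_setX !inE card_Q eqxx.
move=> [e [Q [card_Q ->]]]; apply/orP; right; apply/imsetP.
by exists (e, Q); rewrite // in_setX !inE card_Q eqxx.
Qed.

Lemma simplex_count_le :
  (simplex_count point 0 <= 'C(n, d) + m * 'C(n, d.-1) + 'C(m, d.+1) * 2 + ntop * 'C(m, d))%N.
Proof.
apply: leq_trans (subset_leq_card origin_simplices_cover) _.
apply: leq_card_setU_add; [apply: leq_card_setU_add; [apply: leq_card_setU_add|]|].
all: apply: leq_trans (leq_imset_card _ _) _.
all: by rewrite ?cardsX ?cardsT ?card_bool card_draws ?card_ord.
Qed.
End Construction.

Lemma ffact_leq_exp n j : (n ^_ j <= n ^ j)%N.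
Proof.
rewrite ffact_prod -[in X in (_ <= X)%N](card_ord j) -prod_nat_const.
by apply: leq_prod => i _; exact: leq_subr.
Qed.

Lemma bin_leq_exp n j : ('C(n, j) <= n ^ j)%N.
Proof. by apply: leq_trans (ffact_leq_exp n j); rewrite -bin_ffact leq_pmulr ?fact_gt0. Qed.

Lemma lead_term_mono (R : realDomainType) (d : nat) (N x a : R) :
  0 <= x -> x <= a -> 2 * a <= N ->
  d.+1%:R * N * x ^+ d - 2 * d%:R * x ^+ d.+1 <= d.+1%:R * N * a ^+ d - 2 * d%:R * a ^+ d.+1.
Proof.
move=> x_ge0 x_le_a a_le_N; have a_ge0 : 0 <= a := le_trans x_ge0 x_le_a.
set S := \sum_(i < d) a ^+ (d - i) * x ^+ i.
have diff_succ : a ^+ d.+1 - x ^+ d.+1 = (a - x) * (S + x ^+ d).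
  by rewrite subrXX big_ord_recr /= subnn expr0 mul1r.
have diff_d : a * (a ^+ d - x ^+ d) = (a - x) * S.
  rewrite subrXX mulrCA mulr_sumr; congr (_ * _); apply: eq_bigr => i _.
  by rewrite mulrA -exprS; congr (_ ^+ _ * _); have := ltn_ord i; lia.
have S_ge : d%:R * x ^+ d <= S.
  have -> : d%:R * x ^+ d = \sum_(i < d) x ^+ d by rewrite sumr_const card_ord mulr_natl.
  apply: ler_sum => i _; have i_lt_d := ltn_ord i.
  have -> : x ^+ d = x ^+ (d - i) * x ^+ i by rewrite -exprD; congr (_ ^+ _); lia.
  by rewrite ler_wpM2r ?exprn_ge0 ?lerXn2r.
have ax_ge0 : 0 <= a - x by rewrite subr_ge0.
have pow_diff_ge0 : 0 <= a ^+ d - x ^+ d by rewrite subr_ge0 lerXn2r.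
suff : 2 * d%:R * (a ^+ d.+1 - x ^+ d.+1) <= d.+1%:R * N * (a ^+ d - x ^+ d) by lra.
apply: le_trans (_ : d.+1%:R * (2 * a) * (a ^+ d - x ^+ d) <= _).
  rewrite diff_succ (_ : d.+1%:R * (2 * a) * _ = 2 * d.+1%:R * ((a - x) * S)).
    have := ler_wpM2l ax_ge0 S_ge; rewrite -natr1; nra.
  by rewrite -diff_d; ring.
by rewrite ler_wpM2r // ler_wpM2l.
Qed.

Lemma count_lead_nat d m k :
  (('C(m, d.+1) * 2 + k * 'C(m, d)) * d.+1`! <= 2 * m ^ d.+1 + d.+1 * k * m ^ d)%N.
Proof.
have := ffact_leq_exp m d.+1; have := ffact_leq_exp m d; rewrite -!bin_ffact.
have := leq_mul (leqnn (d.+1 * k)) (ffact_leq_exp m d); rewrite -bin_ffact factS; nia.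
Qed.

Lemma count_lead_le (R : realFieldType) d (alpha : R) n m k :
  (k + 2 * m <= n)%N -> alpha <= 2^-1 -> m%:R <= alpha * n%:R ->
  (('C(m, d.+1) * 2 + k * 'C(m, d))%N)%:R <=
  (d.+1%:R * alpha ^+ d - 2 * d%:R * alpha ^+ d.+1) * n%:R ^+ d.+1 / d.+1`!%:R :> R.
Proof.
move=> k_le alpha_le m_le; rewrite ler_pdivlMr ?ltr0n ?fact_gt0 //.
apply: le_trans (_ : (2 * m ^ d.+1 + d.+1 * k * m ^ d)%:R <= _).
  by rewrite -natrM ler_nat count_lead_nat.
set x : R := m%:R; set N : R := n%:R.
have k_le_gap : k%:R <= N - 2 * x.
  by rewrite lerBrDr /x /N -natrM -natrD ler_nat.
rewrite natrD !natrM !natrX -/x.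
apply: le_trans (_ : 2%:R * x ^+ d.+1 + d.+1%:R * (N - 2 * x) * x ^+ d <= _).
  by rewrite lerD2l ler_wpM2r ?exprn_ge0 ?ler_wpM2l.
have -> : 2%:R * x ^+ d.+1 + d.+1%:R * (N - 2 * x) * x ^+ d =
  d.+1%:R * N * x ^+ d - 2 * d%:R * x ^+ d.+1 by rewrite exprS -natr1; ring.
have -> : (d.+1%:R * alpha ^+ d - 2 * d%:R * alpha ^+ d.+1) * N ^+ d.+1 =
  d.+1%:R * N * (alpha * N) ^+ d - 2 * d%:R * (alpha * N) ^+ d.+1.
  by rewrite !exprMn !exprS; ring.
apply: lead_term_mono => //; have : 0 <= N by []; nra.
Qed.

Lemma count_lower_le d n m : (0 < d)%N -> (m <= n)%N ->
  ('C(n, d) + m * 'C(n, d.-1) <= 2 * n ^ d)%N.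
Proof.
move=> d_gt0 m_le; rewrite mul2n -addnn leq_add ?bin_leq_exp //.
by rewrite -(prednK d_gt0) expnS leq_mul ?bin_leq_exp.
Qed.

Lemma exists_pair_count (R : realType) (alpha : R) n :
  0 < alpha -> alpha <= 2^-1 -> (0 < n)%N ->
  exists m, [/\ (2 * m < n)%N, m%:R <= alpha * n%:R & alpha * n%:R <= m.+1%:R].
Proof.
move=> alpha_gt0 alpha_le n_gt0; set t := Num.truncn (alpha * n%:R).
have an_ge0 : 0 <= alpha * n%:R := mulr_ge0 (ltW alpha_gt0) (ler0n _ n).
exists (minn t (n.-1 %/ 2)); split; first lia.
  by apply: le_trans (_ : t%:R <= _); rewrite ?ler_nat ?geq_minl ?truncn_le.
have [t_le|_] := leqP t (n.-1 %/ 2).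
  by rewrite ltW // -truncn_le_nat.
apply: le_trans (_ : 2^-1 * n%:R <= _); first by rewrite ler_wpM2r.
have : (n <= 2 * (n.-1 %/ 2).+1)%N by lia.
rewrite -(ler_nat R) natrM; lra.
Qed.

Theorem theorem5 (R : realType) (d : nat) (alpha : R) :
  (1 <= d)%N -> 0 < alpha -> alpha <= 2^-1 ->
  exists C : R, forall n : nat, (0 < n)%N ->
    exists S : 'I_n -> 'rV[R]_d,
      injective S /\
      at_depth S 0 (alpha * n%:R) /\
      (simplex_count S 0)%:R <=
        (d.+1%:R * alpha ^+ d - 2 * d%:R * alpha ^+ d.+1)
          * n%:R ^+ d.+1 / (d.+1)`!%:R
        + C * n%:R ^+ d.
Proof.
move=> d_gt0 alpha_gt0 alpha_le; exists 2 => n n_gt0.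
have [m [pairs_lt_n m_le alpha_le_m1]] := exists_pair_count alpha_gt0 alpha_le n_gt0.
exists (@point R d n m); split; first exact: point_inj.
split=> [u c _ c_le|].
  by apply: le_trans alpha_le_m1 _; rewrite ler_nat card_halfspace0_ge.
apply: le_trans (_ : (('C(m, d.+1) * 2 + ntop n m * 'C(m, d)
  + ('C(n, d) + m * 'C(n, d.-1)))%N)%:R <= _).
  by rewrite ler_nat addnC !addnA simplex_count_le.
rewrite natrD lerD ?count_lead_le //; first by rewrite /ntop; lia.
by rewrite -natrX -natrM ler_nat count_lower_le //; lia.
Qed.
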